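(* Let $(X,\Sigma)$ be a measurable space, $(\mathcal{E}_t)_{t\ge0}$ a process of pavings, $\mathscr{A}=\{\mathsf{A}_t(\cdot|E)\colon E\in\mathcal{E}_t,\,t\ge0\}$ a parametric family of conditional aggregation operators, $f\in\mathbf{F}$ and $\boldsymbol{\mu}=(\mu_t)_{t\ge0}$ a family of monotone measures on $\Sigma$. Then for each $t\ge0$: (a) $\boldsymbol{\mu}_{\mathscr{A}}(0_X,t)=0$ if $t>0$, and $\boldsymbol{\mu}_{\mathscr{A}}(0_X,0)=\sup\{\mu_0(E)\colon E\in\mathcal{E}_0\}$; (b) $\boldsymbol{\mu}_{\mathscr{A}}(f,0)=\sup\{\mu_0(E)\colon E\in\mathcal{E}_0\}$; (c) $\boldsymbol{\mu}_{\mathscr{A}}(f,t)=\mu_t(X)$ whenever $X\in\mathcal{E}_t$ and $t\le\mathsf{A}_t(f|X)$.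
   Context: $0_X$ denotes the zero function on $X$. $\Sigma^0=\Sigma\setminus\{\emptyset\}$. $\mathbf{F}$ denotes the set of all $\Sigma$-measurable, nonnegative, bounded functions $f\colon X\to[0,\infty)$. A monotone measure is a map $\mu\colon\Sigma\to[0,\infty]$ with $\mu(B)\le\mu(C)$ whenever $B\subseteq C$, $\mu(\emptyset)=0$ and $\mu(X)>0$. For $E\in\Sigma^0$, a conditional aggregation operator (CAO) w.r.t. $E$ is a map $\mathsf{A}(\cdot|E)\colon\mathbf{F}\to[0,\infty]$ such that (C1) $\mathsf{A}(f|E)\le\mathsf{A}(g|E)$ whenever $f(x)\le g(x)$ for all $x\in E$, and (C2) $\mathsf{A}(\mathbf{1}_{X\setminus E}|E)=0$. A process of pavings is a family $(\mathcal{E}_t)_{t\ge0}$ with $\emptyset\in\mathcal{E}_t\subseteq\Sigma$ for all $t$; $\mathcal{E}_t^0=\mathcal{E}_t\setminus\{\emptyset\}$. A parametric family of CAOs (pFCA) $\{\mathsf{A}_t(\cdot|E)\colon E\in\mathcal{E}_t,\,t\ge0\}$ consists of CAOs $\mathsf{A}_t(\cdot|E)$ w.r.t. $E$ for each $t$ and $E\in\mathcal{E}_t^0$, with the convention $\mathsf{A}_t(\cdot|\emptyset)=\infty$. The generalized level measure is $\boldsymbol{\mu}_{\mathscr{A}}(f,t)=\sup\{\mu_t(E)\colon \mathsf{A}_t(f|E)\ge t,\ E\in\mathcal{E}_t\}$ for $t\ge0$. *)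

From HB Require Import structures.
From mathcomp Require Import all_boot all_order all_algebra.
From mathcomp Require Import all_classical all_reals.
From mathcomp Require Import ereal measure lebesgue_measure numfun.
Set Implicit Arguments. Unset Strict Implicit. Unset Printing Implicit Defensive.
Import Order.TTheory GRing.Theory Num.Theory.
Local Open Scope classical_set_scope.
Local Open Scope ring_scope.
Local Open Scope ereal_scope.

Section Defs.
Context {d : measure_display} {T : measurableType d} {R : realType}.

Definition inF (f : T -> R) : Prop :=
  measurable_fun setT f /\ (forall x, (0 <= f x)%R) /\
  exists M : R, forall x, (f x <= M)%R.

Definition monotone_measure (mu : set T -> \bar R) : Prop :=
  (forall B, measurable B -> 0 <= mu B) /\
  (forall B C, measurable B -> measurable C -> B `<=` C -> mu B <= mu C) /\
  mu set0 = 0 /\ 0 < mu setT.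

Definition isCAO (E : set T) (A : (T -> R) -> \bar R) : Prop :=
  (forall f, inF f -> 0 <= A f) /\
  (forall f g, inF f -> inF g -> (forall x, E x -> (f x <= g x)%R) -> A f <= A g) /\
  A (\1_(~` E)) = 0.

Definition paving_process (Ep : R -> set (set T)) : Prop :=
  forall t, (0 <= t)%R -> Ep t set0 /\ Ep t `<=` measurable.

Definition pFCA (Ep : R -> set (set T)) (A : R -> set T -> (T -> R) -> \bar R)
  : Prop :=
  forall t, (0 <= t)%R ->
    (forall E, Ep t E -> E <> set0 -> isCAO E (A t E)) /\
    (forall f, A t set0 f = +oo).

Definition level_measure (mu : R -> set T -> \bar R) (Ep : R -> set (set T))
  (A : R -> set T -> (T -> R) -> \bar R) (f : T -> R) (t : R) : \bar R :=
  ereal_sup [set mu t E | E in [set E | Ep t E /\ t%:E <= A t E f]].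

End Defs.

From HB Require Import structures.
From mathcomp Require Import all_boot all_order all_algebra.
From mathcomp Require Import all_classical all_reals.
From mathcomp Require Import ereal measure lebesgue_measure numfun.
From mathcomp Require Import measurable_realfun.
Import Order.TTheory GRing.Theory Num.Theory.
Local Open Scope classical_set_scope.
Local Open Scope ring_scope.
Local Open Scope ereal_scope.

(* A CAO vanishes on the zero function: by (C1) [A(0|E) <= A(1_{X\E}|E)],
   which is [0] by (C2). Hence for [t > 0] only the empty set (where the
   convention [A_t(.|emptyset) = +oo] applies) is admissible for [0_X]. At
   [t = 0] the level condition [0 <= A_0(f|E)] always holds, and when [X] itself
   is admissible it is the largest admissible set. *)

Lemma ereal_sup_max (R : realType) (S : set (\bar R)) (x : \bar R) :
  S x -> ubound S x -> ereal_sup S = x.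
Proof.
move=> Sx ubx; apply/le_anti/andP; split; first exact: ge_ereal_sup.
exact: ereal_sup_ubound.
Qed.

Section level_measure_theory.
Context {d : measure_display} {T : measurableType d} {R : realType}.
Implicit Types (Ep : R -> set (set T)) (A : R -> set T -> (T -> R) -> \bar R)
  (mu : R -> set T -> \bar R) (g : T -> R) (E : set T) (t : R).

Lemma inF_cst0 : inF (fun _ : T => 0%R : R).
Proof. by split; [exact: measurable_cst | split=> //; exists 0%R]. Qed.

Lemma inF_indicC E : measurable E -> inF (\1_(~` E) : T -> R).
Proof.
move=> mE; split; first exact/measurable_indicP/measurableC.
split=> [x|]; first by rewrite indicE.
by exists 1%R => x; rewrite indicE; case: (x \in ~` E).
Qed.

Lemma isCAO_cst0 {E} {B : (T -> R) -> \bar R} :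
  measurable E -> isCAO E B -> B (fun _ => 0%R) = 0.
Proof.
move=> mE [B_ge0 [B_mono B_indicC]]; apply/le_anti/andP; split.
  rewrite -B_indicC; apply: B_mono; [exact: inF_cst0 | exact: inF_indicC |].
  by move=> x _; rewrite indicE.
exact/B_ge0/inF_cst0.
Qed.

Lemma pFCA_ge0 {Ep A t E g} :
  pFCA Ep A -> (0 <= t)%R -> Ep t E -> inF g -> 0 <= A t E g.
Proof.
move=> hA t_ge0 EpE hg; have [A_CAO A_set0] := hA t t_ge0.
have [->|/eqP E_neq0] := eqVneq E set0; first by rewrite A_set0 leey.
by have [+ _] := A_CAO E EpE E_neq0; apply.
Qed.

Lemma level_measure_at0 mu Ep A g :
  pFCA Ep A -> inF g ->
  level_measure mu Ep A g 0%R = ereal_sup [set mu 0%R E | E in Ep 0%R].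
Proof.
move=> hA hg; rewrite /level_measure; congr (ereal_sup (image _ _)).
apply/seteqP; split=> E /= => [[]//|EpE]; split=> //.
exact: pFCA_ge0 hA (lexx 0%R) EpE hg.
Qed.

Lemma level_measure_cst0 mu Ep A t :
  paving_process Ep -> pFCA Ep A -> monotone_measure (mu t) -> (0 < t)%R ->
  level_measure mu Ep A (fun _ => 0%R) t = 0.
Proof.
move=> hE hA [_ [_ [mu0 _]]] t_gt0; have t_ge0 := ltW t_gt0.
have [Ep0 Ep_meas] := hE t t_ge0; have [A_CAO A_set0] := hA t t_ge0.
rewrite /level_measure.
suff -> : [set E | Ep t E /\ t%:E <= A t E (fun _ => 0%R)] = [set set0].
  by rewrite image_set1 mu0 ereal_sup1.
apply/seteqP; split=> E /= => [[EpE tA]|->]; last first.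
  by split=> //; rewrite A_set0 leey.
have [//|/eqP E_neq0] := eqVneq E set0.
move: tA; rewrite (isCAO_cst0 (Ep_meas _ EpE) (A_CAO E EpE E_neq0)).
by rewrite leNgt lte_fin t_gt0.
Qed.

Lemma level_measure_setT mu Ep A g t :
  paving_process Ep -> monotone_measure (mu t) -> (0 <= t)%R ->
  Ep t setT -> t%:E <= A t setT g -> level_measure mu Ep A g t = mu t setT.
Proof.
move=> hE [_ [mu_mono _]] t_ge0 EpT tA; have [_ Ep_meas] := hE t t_ge0.
apply: ereal_sup_max; first by exists setT.
by move=> _ [E [EpE _] <-]; apply: mu_mono => //; exact: Ep_meas.
Qed.

End level_measure_theory.

Theorem proposition3p6 (d : measure_display) (T : measurableType d) (R : realType)
  (Ep : R -> set (set T)) (A : R -> set T -> (T -> R) -> \bar R)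
  (mu : R -> set T -> \bar R) (f : T -> R) :
  paving_process Ep -> pFCA Ep A -> inF f ->
  (forall t, (0 <= t)%R -> monotone_measure (mu t)) ->
  forall t : R, (0 <= t)%R ->
    ((0 < t)%R -> level_measure mu Ep A (fun _ => 0%R) t = 0) /\
    level_measure mu Ep A (fun _ => 0%R) 0%R = ereal_sup [set mu 0%R E | E in Ep 0%R] /\
    level_measure mu Ep A f 0%R = ereal_sup [set mu 0%R E | E in Ep 0%R] /\
    (Ep t setT -> t%:E <= A t setT f -> level_measure mu Ep A f t = mu t setT).
Proof.
move=> hE hA hf hmu t t_ge0; split; [|split; [|split]].
- by move=> t_gt0; apply: level_measure_cst0 => //; exact: hmu.
- by apply: level_measure_at0 => //; exact: inF_cst0.
- exact: level_measure_at0.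
- by apply: level_measure_setT => //; exact: hmu.
Qed.
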